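(* Let $A\subset\mathbb R^n$ be any set and $f:A\to\mathbb R$. Assume there is a constant $C>0$ and for each $p\in A$ a vector $a_p\in\mathbb R^n$ such that $$f(p)+\langle x-p,a_p\rangle-\tfrac C2\|x-p\|^2\le f(x)\le f(p)+\langle x-p,a_p\rangle+\tfrac C2\|x-p\|^2\quad\text{for all }x\in A,$$ and such that for all $p,q\in A$ and all $x\in\mathbb R^n$ $$f(p)+\langle x-p,a_p\rangle-\tfrac C2\|x-p\|^2\le f(q)+\langle x-q,a_q\rangle+\tfrac C2\|x-q\|^2.$$ Then there is a function $F:\mathbb R^n\to\mathbb R$ of class $C^{1,1}$ whose restriction to $A$ is $f$.
   Context: No closedness or measurability of $A$ and no continuity of $f$ or of $p\mapsto a_p$ is assumed. $C^{1,1}$ means continuously differentiable with locally Lipschitz derivative. *)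

From HB Require Import structures.
From mathcomp Require Import all_boot all_order all_algebra.
From mathcomp Require Import all_classical all_reals all_analysis.
Set Implicit Arguments. Unset Strict Implicit. Unset Printing Implicit Defensive.
Import Order.TTheory GRing.Theory Num.Theory.
Import numFieldNormedType.Exports.
Local Open Scope ring_scope.
Local Open Scope classical_set_scope.

Definition dotv (R : realType) (n : nat) (u v : 'rV[R]_n) : R :=
  \sum_(i < n) u 0 i * v 0 i.

Definition enorm (R : realType) (n : nat) (u : 'rV[R]_n) : R :=
  Num.sqrt (dotv u u).

(* F : R^n -> R is C^{1,1}: differentiable everywhere, with gradient G
   (i.e. dF(x) h = <h, G x>), and G is locally Lipschitz (hence continuous). *)
Definition C11 (R : realType) (n : nat) (F : 'rV[R]_n -> R) : Prop :=
  exists G : 'rV[R]_n -> 'rV[R]_n,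
    (forall x : 'rV[R]_n,
        differentiable F x /\ ('d F x : 'rV[R]_n -> R) = (fun h => dotv h (G x))) /\
    (forall x : 'rV[R]_n, exists r : R, exists L : R, 0 < r /\
        forall y z : 'rV[R]_n, enorm (y - x) < r -> enorm (z - x) < r ->
          enorm (G y - G z) <= L * enorm (y - z)).

(* Adding C/2 |x|^2 turns every upper barrier f q + <x - q, a q> + C/2 |x - q|^2
   into a convex paraboloid of curvature 2C and every lower barrier into an
   affine function, each lower barrier lying below each upper one. The convex
   envelope h of the upper barriers is then convex, sandwiched between the
   barriers (so h = f + C/2 |.|^2 on A), and semiconcave,
   h (x + u) + h (x - u) <= 2 h x + 2C |u|^2, since translating a convex
   combination translates each paraboloid. A convex semiconcave function has
   linear directional derivatives and a two-sided quadratic Taylor bound, which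
   yields a locally Lipschitz gradient; F = h - C/2 |.|^2 is the extension. *)

From HB Require Import structures.
From mathcomp Require Import all_boot all_order all_algebra.
From mathcomp Require Import all_classical all_reals all_analysis.
From mathcomp Require Import ring lra.
Import Order.TTheory GRing.Theory Num.Theory.
Import numFieldNormedType.Exports.
Local Open Scope ring_scope.
Local Open Scope classical_set_scope.

Set Implicit Arguments. Unset Strict Implicit. Unset Printing Implicit Defensive.

Section DotProduct.
Variables (R : realType) (n : nat).
Local Notation V := 'rV[R]_n.
Implicit Types u v w : V.

Lemma dotvC u v : dotv u v = dotv v u.
Proof. by apply: eq_bigr => i _; rewrite mulrC. Qed.

Lemma dotvDl u v w : dotv (u + v) w = dotv u w + dotv v w.
Proof. by rewrite /dotv -big_split; apply: eq_bigr => i _; rewrite mxE mulrDl. Qed.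

Lemma dotvZl (c : R) u w : dotv (c *: u) w = c * dotv u w.
Proof. by rewrite /dotv mulr_sumr; apply: eq_bigr => i _; rewrite mxE mulrA. Qed.

Lemma dotvNl u w : dotv (- u) w = - dotv u w.
Proof. by rewrite -scaleN1r dotvZl mulN1r. Qed.

Lemma dotv0l w : dotv 0 w = 0.
Proof. by rewrite -(scale0r 0) dotvZl mul0r. Qed.

Lemma dotvDr u v w : dotv w (u + v) = dotv w u + dotv w v.
Proof. by rewrite !(dotvC w) dotvDl. Qed.

Lemma dotvZr (c : R) u w : dotv w (c *: u) = c * dotv w u.
Proof. by rewrite !(dotvC w) dotvZl. Qed.

Lemma dotvNr u w : dotv w (- u) = - dotv w u.
Proof. by rewrite !(dotvC w) dotvNl. Qed.

Lemma dotvBr u v w : dotv w (u - v) = dotv w u - dotv w v.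
Proof. by rewrite dotvDr dotvNr. Qed.

Lemma dotv0r w : dotv w 0 = 0.
Proof. by rewrite dotvC dotv0l. Qed.

Lemma dotv_ge0 u : 0 <= dotv u u.
Proof. by apply: sumr_ge0 => i _; rewrite -expr2 sqr_ge0. Qed.

Lemma enorm_sqr u : enorm u ^+ 2 = dotv u u.
Proof. by rewrite sqr_sqrtr // dotv_ge0. Qed.

Lemma dotv_suml (T : Type) (s : seq T) (F : T -> V) w :
  dotv (\sum_(e <- s) F e) w = \sum_(e <- s) dotv (F e) w.
Proof.
elim: s => [|e s IH]; first by rewrite !big_nil dotv0l.
by rewrite !big_cons dotvDl IH.
Qed.

Lemma dotvDD u v : dotv (u + v) (u + v) = dotv u u + 2 * dotv u v + dotv v v.
Proof. rewrite dotvDl !dotvDr (dotvC v u); ring. Qed.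

Lemma dotvBB u v : dotv (u - v) (u - v) = dotv u u - 2 * dotv u v + dotv v v.
Proof. rewrite dotvDD dotvNr dotvNl dotvNr; ring. Qed.

Lemma dotvZZ (c : R) u : dotv (c *: u) (c *: u) = c ^+ 2 * dotv u u.
Proof. rewrite dotvZl dotvZr; ring. Qed.

Lemma dotvNN u : dotv (- u) (- u) = dotv u u.
Proof. by rewrite dotvNl dotvNr opprK. Qed.

Lemma ler_dotv2 u v : 2 * dotv u v <= dotv u u + dotv v v.
Proof. by have := dotv_ge0 (u - v); rewrite dotvBB; lra. Qed.

End DotProduct.

Lemma ler_of_ler_add_mul (R : realType) (x y c : R) : 0 <= c ->
  (forall t, 0 < t -> x <= y + t * c) -> x <= y.
Proof.
move=> c_ge0 H; apply/ler_addgt0Pr => e e_gt0.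
have t_gt0 : 0 < e / (c + 1) by apply: divr_gt0 => //; lra.
apply: le_trans (H _ t_gt0) _; rewrite lerD2l.
rewrite mulrAC ler_pdivrMr; last lra.
by rewrite mulrDr mulr1 lerDl ltW.
Qed.

Lemma ler_mul_inf (R : realType) (S : set R) (l c : R) : S !=set0 ->
  has_lbound S -> 0 <= l -> (forall v, S v -> c <= l * v) -> c <= l * inf S.
Proof.
move=> [v0 Sv0] lbS l_ge0 H.
have [l_eq0|l_neq0] := eqVneq l 0; first by have := H _ Sv0; rewrite l_eq0 !mul0r.
have l_gt0 : 0 < l by rewrite lt0r l_neq0.
rewrite mulrC -ler_pdivrMr //; apply: lb_le_inf; first by exists v0.
by move=> v Sv; rewrite ler_pdivrMr // mulrC; apply: H.
Qed.

Section ConvexSemiconcave.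
Variables (R : realType) (n : nat).
Local Notation V := 'rV[R]_n.
Variables (h : V -> R) (K : R).
Hypothesis K_ge0 : 0 <= K.
Hypothesis h_convex : forall x y (l : R), 0 <= l -> l <= 1 ->
  h (l *: x + (1 - l) *: y) <= l * h x + (1 - l) * h y.
Hypothesis h_semiconcave : forall x u,
  h (x + u) + h (x - u) <= 2 * h x + K * dotv u u.

Lemma convex_slope_le x k s t : 0 < s -> 0 < t ->
  t * (h x - h (x - s *: k)) <= s * (h (x + t *: k) - h x).
Proof.
move=> s_gt0 t_gt0.
have st_neq0 : s + t != 0 by rewrite gt_eqF //; lra.
have l_ge0 : 0 <= t / (s + t) by apply: divr_ge0; lra.
have l_le1 : t / (s + t) <= 1 by rewrite ler_pdivrMr; lra.
have := h_convex (x - s *: k) (x + t *: k) l_ge0 l_le1.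
have -> : t / (s + t) *: (x - s *: k) + (1 - t / (s + t)) *: (x + t *: k) = x.
  by apply/rowP => i; rewrite !mxE; field.
move=> H.
have {}H : (s + t) * h x <= t * h (x - s *: k) + s * h (x + t *: k).
  apply: le_trans (ler_wpM2l _ H) _; first lra.
  by rewrite le_eqVlt; apply/orP; left; apply/eqP; field.
nra.
Qed.

Definition fwd_slopes x k :=
  [set d | exists2 t, 0 < t & d = (h (x + t *: k) - h x) / t].

Definition dirder x k := inf (fwd_slopes x k).

Lemma fwd_slopes_neq0 x k : fwd_slopes x k !=set0.
Proof. by exists ((h (x + 1 *: k) - h x) / 1); exists 1. Qed.

Lemma has_lbound_fwd_slopes x k : has_lbound (fwd_slopes x k).
Proof.
exists (h x - h (x - k)) => _ [t t_gt0 ->]; rewrite ler_pdivlMr //.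
by have := convex_slope_le x k ltr01 t_gt0; rewrite scale1r; nra.
Qed.

Lemma dirder_le_slope x k t : 0 < t -> t * dirder x k <= h (x + t *: k) - h x.
Proof.
move=> t_gt0; rewrite mulrC -ler_pdivlMr //.
by apply: ge_inf; [exact: has_lbound_fwd_slopes | exists t].
Qed.

Lemma back_slope_le_dirder x k s : 0 < s -> h x - h (x - s *: k) <= s * dirder x k.
Proof.
move=> s_gt0; rewrite mulrC -ler_pdivrMr //.
apply: lb_le_inf; first exact: fwd_slopes_neq0.
move=> _ [t t_gt0 ->]; rewrite ler_pdivlMr // mulrAC ler_pdivrMr //.
by have := convex_slope_le x k s_gt0 t_gt0; nra.
Qed.

Lemma slope_le_dirder x k t : 0 < t ->
  h (x + t *: k) - h x <= t * dirder x k + t * (t * (K * dotv k k)).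
Proof.
move=> t_gt0; have := h_semiconcave x (t *: k); rewrite dotvZZ.
by have := back_slope_le_dirder x k t_gt0; nra.
Qed.

Lemma dirderN x k : dirder x (- k) = - dirder x k.
Proof.
have Kk_ge0 := mulr_ge0 K_ge0 (dotv_ge0 k).
apply/eqP; rewrite eq_le; apply/andP; split.
  apply: (ler_of_ler_add_mul Kk_ge0) => t t_gt0.
  have := dirder_le_slope x (- k) t_gt0; have := dirder_le_slope x k t_gt0.
  by have := h_semiconcave x (t *: k); rewrite dotvZZ scalerN; nra.
apply: (ler_of_ler_add_mul Kk_ge0) => t t_gt0.
have := back_slope_le_dirder x k t_gt0; have := slope_le_dirder x (- k) t_gt0.
by rewrite dotvNN scalerN; nra.
Qed.

Lemma dirder0 x : dirder x 0 = 0.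
Proof.
have := dirderN x 0; rewrite oppr0 => /eqP; rewrite -addr_eq0 -mulr2n.
by rewrite mulrn_eq0 /= => /eqP.
Qed.

Lemma dirderZ_gt0 x k c : 0 < c -> dirder x (c *: k) = c * dirder x k.
Proof.
move=> c_gt0; apply/eqP; rewrite eq_le; apply/andP; split.
  apply: (@ler_of_ler_add_mul _ _ _ (c * (c * (K * dotv k k)))).
    by rewrite !mulr_ge0 ?dotv_ge0 // ltW.
  move=> t t_gt0; have tc_gt0 : 0 < t * c by apply: mulr_gt0.
  have := dirder_le_slope x (c *: k) t_gt0; have := slope_le_dirder x k tc_gt0.
  by rewrite scalerA; nra.
apply: (ler_of_ler_add_mul (mulr_ge0 K_ge0 (dotv_ge0 (c *: k)))) => t t_gt0.
have tc_gt0 : 0 < t * c by apply: mulr_gt0.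
have := dirder_le_slope x k tc_gt0; have := slope_le_dirder x (c *: k) t_gt0.
by rewrite scalerA; nra.
Qed.

(* Subadditivity: compare the chord from x to x + t (k1 + k2) with the midpoint
   convexity bound at x + t/2 (k1 + k2) and semiconcavity around that midpoint. *)
Lemma dirderD_le x k1 k2 : dirder x (k1 + k2) <= dirder x k1 + dirder x k2.
Proof.
set k := k1 + k2.
apply: (@ler_of_ler_add_mul _ _ _
  (K * dotv k k / 4 + K * dotv k1 k1 + K * dotv k2 k2)).
  by have := mulr_ge0 K_ge0 (dotv_ge0 k); have := mulr_ge0 K_ge0 (dotv_ge0 k1);
     have := mulr_ge0 K_ge0 (dotv_ge0 k2); lra.
move=> t t_gt0.
have chord := dirder_le_slope x k t_gt0.
have slope1 := slope_le_dirder x k1 t_gt0.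
have slope2 := slope_le_dirder x k2 t_gt0.
have semi := h_semiconcave (x + (t / 2) *: k) ((t / 2) *: k).
have end_pt : x + (t / 2) *: k + (t / 2) *: k = x + t *: k.
  by apply/rowP => i; rewrite !mxE; field.
have start_pt : x + (t / 2) *: k - (t / 2) *: k = x.
  by apply/rowP => i; rewrite !mxE; field.
rewrite end_pt start_pt dotvZZ in semi.
have mid_pt : 1 / 2 *: (x + t *: k1) + (1 - 1 / 2) *: (x + t *: k2)
              = x + (t / 2) *: k.
  by apply/rowP => i; rewrite !mxE; field.
have := @h_convex (x + t *: k1) (x + t *: k2) (1 / 2) ltac:(lra) ltac:(lra).
rewrite mid_pt.
nra.
Qed.

Lemma dirderD x k1 k2 : dirder x (k1 + k2) = dirder x k1 + dirder x k2.
Proof.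
apply/eqP; rewrite eq_le dirderD_le /=.
by have := dirderD_le x (- k1) (- k2); rewrite -opprD !dirderN; lra.
Qed.

Lemma dirderZ x k c : dirder x (c *: k) = c * dirder x k.
Proof.
have [c_lt0|c_gt0|->] := ltgtP c 0; last by rewrite scale0r dirder0 mul0r.
  rewrite -[c]opprK scaleNr dirderN dirderZ_gt0 ?oppr_gt0 //; lra.
exact: dirderZ_gt0.
Qed.

Definition grad x : V := \row_i dirder x 'e_i.

Lemma dirder_dotv x k : dirder x k = dotv k (grad x).
Proof.
rewrite {1}(row_sum_delta k) (big_morph (dirder x) (dirderD x) (dirder0 x)).
by apply: eq_bigr => i _; rewrite dirderZ mxE.
Qed.

Lemma convex_semiconcave_taylor x k :
  0 <= h (x + k) - h x - dotv k (grad x) <= K * dotv k k.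
Proof.
rewrite -dirder_dotv.
have := dirder_le_slope x k ltr01; have := slope_le_dirder x k ltr01.
by rewrite scale1r; lra.
Qed.

End ConvexSemiconcave.

Section QuadraticTaylor.
Variables (R : realType) (n : nat).
Local Notation V := 'rV[R]_n.

Lemma abs_coord_le_norm (k : V) i : `|k 0 i| <= `|k|.
Proof.
rewrite [leRHS]/Num.norm /= mx_normrE.
by apply/bigmax_geP; right => /=; exists (0, i).
Qed.

Lemma dotv_self_le_norm (k : V) : dotv k k <= n%:R * `|k| ^+ 2.
Proof.
have : \sum_(i < n) k 0 i * k 0 i <= \sum_(i < n) `|k| ^+ 2.
  apply: ler_sum => i _; apply: le_trans (ler_norm _) _; rewrite normrM expr2.
  by apply: ler_pM => //; apply: abs_coord_le_norm.
by move/le_trans; apply; rewrite sumr_const card_ord mulr_natl.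
Qed.

Lemma abs_dotv_le_norm (k g : V) : `|dotv k g| <= (\sum_i `|g 0 i|) * `|k|.
Proof.
rewrite /dotv mulr_suml; apply: le_trans (ler_norm_sum _ _ _) _.
apply: ler_sum => i _; rewrite normrM mulrC.
by apply: ler_wpM2l => //; apply: abs_coord_le_norm.
Qed.

Definition dotvr (g : V) : V -> R := fun u => dotv u g.

Lemma dotvr_linear (g : V) : linear (dotvr g).
Proof. by move=> c u v; rewrite /dotvr dotvDl dotvZl. Qed.

HB.instance Definition _ (g : V) :=
  GRing.isLinear.Build R V R *:%R (dotvr g) (dotvr_linear g).

Lemma dotvr_continuous (g : V) : continuous (dotvr g).
Proof.
apply/linear_bounded_continuous/bounded_funP => r.
exists ((\sum_i `|g 0 i|) * r) => k kr.
apply: le_trans (abs_dotv_le_norm k g) _; apply: ler_wpM2l => //.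
by apply: sumr_ge0.
Qed.

Variables (F : V -> R) (G : V -> V) (K : R).
Hypothesis K_ge0 : 0 <= K.
Hypothesis F_taylor : forall x k,
  `|F (x + k) - F x - dotv k (G x)| <= K * dotv k k.

Lemma quadratic_taylor_diff x :
  differentiable F x /\ ('d F x : V -> R) = dotvr (G x).
Proof.
have dF : F \o shift x = cst (F x) + dotvr (G x) +o_ 0 id.
  apply/eqaddoP => e e_gt0.
  have Kn_ge0 : 0 <= K * n%:R by apply: mulr_ge0.
  have d_gt0 : 0 < e / (K * n%:R + 1) by apply: divr_gt0 => //; lra.
  near=> k.
  change (`|F (k + x) - (F x + dotvr (G x) k)| <= e * `|k|).
  rewrite /dotvr opprD addrA [k + x]addrC.
  apply: le_trans (F_taylor x k) _.
  have k_small : `|k| <= e / (K * n%:R + 1).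
    by near: k; apply: filterS (nbhs0_le d_gt0).
  apply: le_trans (ler_wpM2l K_ge0 (dotv_self_le_norm k)) _.
  have k_ge0 : 0 <= `|k| by [].
  have : (K * n%:R + 1) * `|k| <= e by rewrite mulrC -ler_pdivlMr //; lra.
  nra.
have dF_eq := diff_unique (@dotvr_continuous (G x)) dF.
split; last exact: dF_eq.
by apply/diff_locallyP; rewrite dF_eq; split; [exact: dotvr_continuous | exact: dF].
Unshelve. all: by end_near.
Qed.

(* Expanding F around x and around x + d in a direction u bounds
   <u, G (x + d) - G x> by 3K (|u|^2 + |d|^2); choosing
   u = (G (x + d) - G x) / (6K + 1) gives the Lipschitz bound. *)
Lemma quadratic_taylor_grad_lipschitz x d :
  dotv (G (x + d) - G x) (G (x + d) - G x) <= (6 * K + 1) ^+ 2 * dotv d d.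
Proof.
set g := G (x + d) - G x.
have test_dir (u : V) : dotv u g <= 3 * K * (dotv u u + dotv d d).
  have at_x := F_taylor x d; have at_x' := F_taylor x (u + d).
  have at_xd := F_taylor (x + d) u.
  have xdu : x + (u + d) = x + d + u by rewrite [u + d]addrC addrA.
  have ug : dotv u g = dotv u (G (x + d)) - dotv u (G x) by rewrite dotvBr.
  have udG : dotv (u + d) (G x) = dotv u (G x) + dotv d (G x) by rewrite dotvDl.
  rewrite xdu udG dotvDD in at_x'; rewrite ug.
  have := ler_wpM2l K_ge0 (ler_dotv2 u d).
  have := mulr_ge0 K_ge0 (dotv_ge0 u); have := mulr_ge0 K_ge0 (dotv_ge0 d).
  move: at_x at_x' at_xd; rewrite !ler_norml.
  move: (F (x + d)) (F x) (F (x + d + u)) => p q r.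
  nra.
set L := 6 * K + 1.
have L_gt0 : 0 < L by rewrite /L; have := K_ge0; lra.
have L_neq0 : L != 0 by rewrite gt_eqF.
have := test_dir (L^-1 *: g); rewrite dotvZl dotvZZ.
have g_ge0 := dotv_ge0 g; have d_ge0 := dotv_ge0 d.
move: (dotv g g) (dotv d d) g_ge0 d_ge0 => gg dd g_ge0 d_ge0 H.
have := ler_wpM2l (ltW (exprn_gt0 2 L_gt0)) H.
have -> : L ^+ 2 * (L^-1 * gg) = L * gg by field.
have -> : L ^+ 2 * (3 * K * (L^-1 ^+ 2 * gg + dd)) = 3 * K * (gg + L ^+ 2 * dd).
  by field.
have := mulr_ge0 (sqr_ge0 L) d_ge0.
have := K_ge0; rewrite /L; nra.
Qed.

Lemma C11_of_quadratic_taylor : C11 F.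
Proof.
exists G; split; first exact: quadratic_taylor_diff.
move=> x; exists 1, (6 * K + 1); split => // y z _ _.
have := quadratic_taylor_grad_lipschitz z (y - z).
have -> : z + (y - z) = y by rewrite addrC subrK.
move=> H.
apply: le_trans (ler_wsqrtr H) _.
have L_ge0 : 0 <= 6 * K + 1 by have := K_ge0; lra.
by rewrite sqrtrM ?sqr_ge0 // sqrtr_sqr ger0_norm.
Qed.

End QuadraticTaylor.

Lemma taylor_subr_sqr (R : realType) (n : nat) (h : 'rV[R]_n -> R)
    (g : 'rV[R]_n -> 'rV[R]_n) (K c : R) : 0 <= c ->
  (forall x k, 0 <= h (x + k) - h x - dotv k (g x) <= K * dotv k k) ->
  forall x k, `|(h (x + k) - c / 2 * dotv (x + k) (x + k))
                - (h x - c / 2 * dotv x x) - dotv k (g x - c *: x)|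
              <= (K + c) * dotv k k.
Proof.
move=> c_ge0 h_taylor x k.
have := h_taylor x k; rewrite dotvBr dotvZr dotvDD (dotvC k x).
have := mulr_ge0 c_ge0 (dotv_ge0 k).
move: (h (x + k)) (h x) (dotv k (g x)) (dotv x k) (dotv k k) (dotv x x).
move=> hxk hx kg xk kk xx ck_ge0 /andP[lo hi]; rewrite ler_norml.
by apply/andP; split; lra.
Qed.

Section ConvexEnvelope.
Variables (R : realType) (n : nat).
Local Notation V := 'rV[R]_n.
Variables (A : set V) (f : V -> R) (C : R) (a : V -> V).
Hypothesis barrier_le : forall p q x, A p -> A q ->
  f p + dotv (x - p) (a p) - C / 2 * enorm (x - p) ^+ 2 <=
  f q + dotv (x - q) (a q) + C / 2 * enorm (x - q) ^+ 2.

Definition upper q y :=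
  f q + dotv (y - q) (a q) + C / 2 * dotv (y - q) (y - q) + C / 2 * dotv y y.

Definition lower p y :=
  f p + dotv (y - p) (a p) - C / 2 * dotv (y - p) (y - p) + C / 2 * dotv y y.

Lemma lower_le_upper p q y : A p -> A q -> lower p y <= upper q y.
Proof. by move=> Ap Aq; have := barrier_le y Ap Aq; rewrite !enorm_sqr /lower /upper; lra. Qed.

Lemma lowerE p y :
  lower p y = (f p - dotv p (a p) - C / 2 * dotv p p) + dotv y (a p + C *: p).
Proof. by rewrite /lower dotvBB dotvDl dotvNl dotvDr dotvZr; field. Qed.

Lemma upperDB q y u :
  upper q (y + u) + upper q (y - u) = 2 * upper q y + 2 * C * dotv u u.
Proof.
rewrite /upper.
have -> : y + u - q = (y - q) + u by rewrite addrAC.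
have -> : y - u - q = (y - q) - u by rewrite addrAC.
move: (y - q) => w.
by rewrite (dotvDD w) (dotvBB w) (dotvDD y) (dotvBB y) !dotvDl !dotvNl; field.
Qed.

(* A combination is a list of triples (weight, anchor q, point y); it stands
   for the value sum weight * upper q y at the barycentre of the points. *)
Definition comb := seq (R * (V * V)).

Definition is_wcomb (t : R) (z : V) (s : comb) :=
  [/\ forall e, e \in s -> 0 <= e.1 /\ A e.2.1,
      \sum_(e <- s) e.1 = t & \sum_(e <- s) e.1 *: e.2.2 = z].

Definition comb_val (s : comb) := \sum_(e <- s) e.1 * upper e.2.1 e.2.2.

Definition env_vals x := [set comb_val s | s in is_wcomb 1 x].

Definition env x := inf (env_vals x).

Definition comb_scale (c : R) (s : comb) : comb := [seq (c * e.1, e.2) | e <- s].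

Definition comb_shift (u : V) (s : comb) : comb :=
  [seq (e.1, (e.2.1, e.2.2 + u)) | e <- s].

Lemma is_wcomb1 q x : A q -> is_wcomb 1 x [:: (1, (q, x))].
Proof.
move=> Aq; split; last by rewrite big_seq1 /= scale1r.
  by move=> e; rewrite inE => /eqP ->.
by rewrite big_seq1.
Qed.

Lemma is_wcomb_cat t1 t2 z1 z2 s1 s2 : is_wcomb t1 z1 s1 -> is_wcomb t2 z2 s2 ->
  is_wcomb (t1 + t2) (z1 + z2) (s1 ++ s2).
Proof.
move=> [s1_ok s1_t s1_z] [s2_ok s2_t s2_z]; split.
- by move=> e; rewrite mem_cat => /orP[/s1_ok|/s2_ok].
- by rewrite big_cat s1_t s2_t.
- by rewrite big_cat s1_z s2_z.
Qed.

Lemma is_wcomb_scale c t z s : 0 <= c -> is_wcomb t z s ->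
  is_wcomb (c * t) (c *: z) (comb_scale c s).
Proof.
move=> c_ge0 [s_ok s_t s_z]; split.
- move=> _ /mapP[e es ->] /=; have [e_ge0 Ae] := s_ok e es.
  by split => //; apply: mulr_ge0.
- by rewrite big_map -mulr_sumr s_t.
- by rewrite big_map -s_z scaler_sumr; apply: eq_bigr => e _; rewrite scalerA.
Qed.

Lemma is_wcomb_shift u t z s : is_wcomb t z s ->
  is_wcomb t (z + t *: u) (comb_shift u s).
Proof.
move=> [s_ok s_t s_z]; split.
- by move=> _ /mapP[e es ->] /=; apply: s_ok.
- by rewrite big_map.
- rewrite big_map /=; under eq_bigr do rewrite scalerDr.
  by rewrite big_split /= s_z -scaler_suml s_t.
Qed.

Lemma comb_val_scale c s : comb_val (comb_scale c s) = c * comb_val s.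
Proof. by rewrite /comb_val big_map mulr_sumr; apply: eq_bigr => e _; rewrite mulrA. Qed.

Lemma comb_val_shiftDB u t z s : is_wcomb t z s ->
  comb_val (comb_shift u s) + comb_val (comb_shift (- u) s)
  = 2 * comb_val s + t * (2 * C * dotv u u).
Proof.
case=> _ s_t _; rewrite /comb_val !big_map -big_split /= -s_t mulr_suml mulr_sumr.
by rewrite -big_split; apply: eq_bigr => e _ /=; rewrite -mulrDr upperDB; ring.
Qed.

Lemma lower_le_comb_val p x s : A p -> is_wcomb 1 x s -> lower p x <= comb_val s.
Proof.
move=> Ap [s_ok s_t s_z].
have lower_avg : \sum_(e <- s) e.1 * lower p e.2.2 = lower p x.
  rewrite [RHS]lowerE.
  set c := f p - _ - _; set w := a p + _.
  transitivity (\sum_(e <- s) (e.1 * c + dotv (e.1 *: e.2.2) w)).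
    by apply: eq_bigr => e _; rewrite lowerE dotvZl -/c -/w; ring.
  by rewrite big_split /= -mulr_suml s_t mul1r -(dotv_suml s (fun e => e.1 *: e.2.2)) s_z.
rewrite -lower_avg /comb_val big_seq_cond [leRHS]big_seq_cond.
apply: ler_sum => e /andP[es _]; have [e_ge0 Ae] := s_ok e es.
by apply: ler_wpM2l => //; apply: lower_le_upper.
Qed.

Lemma env_le_upper q x : A q -> env x <= upper q x.
Proof.
move=> Aq; apply: ge_inf; last first.
  by exists [:: (1, (q, x))]; [apply: is_wcomb1 | rewrite /comb_val big_seq1 mul1r].
by exists (lower q x) => _ [s s_ok <-]; apply: lower_le_comb_val s_ok.
Qed.

Lemma env_ge_lower p x : A p -> lower p x <= env x.
Proof.
move=> Ap; apply: lb_le_inf; last by move=> _ [s s_ok <-]; apply: lower_le_comb_val s_ok.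
by exists (comb_val [:: (1, (p, x))]), [:: (1, (p, x))]; first exact: is_wcomb1.
Qed.

Lemma env_eq p : A p -> env p = f p + C / 2 * dotv p p.
Proof.
move=> Ap; have := env_ge_lower p Ap; have := env_le_upper p Ap.
by rewrite /lower /upper subrr dotv0l !dotv0r; lra.
Qed.

Variables (p0 : V).
Hypothesis A_p0 : A p0.

Lemma env_vals_neq0 x : env_vals x !=set0.
Proof.
by exists (comb_val [:: (1, (p0, x))]), [:: (1, (p0, x))]; first exact: is_wcomb1.
Qed.

Lemma has_lbound_env_vals x : has_lbound (env_vals x).
Proof. by exists (lower p0 x) => _ [s s_ok <-]; apply: lower_le_comb_val s_ok. Qed.

Lemma env_le_comb_val x s : is_wcomb 1 x s -> env x <= comb_val s.
Proof. by move=> s_ok; apply: ge_inf; [exact: has_lbound_env_vals | exists s]. Qed.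

Lemma env_convex x y l : 0 <= l -> l <= 1 ->
  env (l *: x + (1 - l) *: y) <= l * env x + (1 - l) * env y.
Proof.
move=> l_ge0 l_le1; have l'_ge0 : 0 <= 1 - l by lra.
have mix s1 s2 : is_wcomb 1 x s1 -> is_wcomb 1 y s2 ->
    env (l *: x + (1 - l) *: y) <= l * comb_val s1 + (1 - l) * comb_val s2.
  move=> s1_ok s2_ok; rewrite -!comb_val_scale /comb_val -big_cat.
  apply: env_le_comb_val.
  have := is_wcomb_cat (is_wcomb_scale l_ge0 s1_ok) (is_wcomb_scale l'_ge0 s2_ok).
  by rewrite !mulr1 addrC subrK.
have mix_x s2 : is_wcomb 1 y s2 ->
    env (l *: x + (1 - l) *: y) - (1 - l) * comb_val s2 <= l * env x.
  move=> s2_ok; apply: ler_mul_inf l_ge0 _ => //;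
    [exact: env_vals_neq0 | exact: has_lbound_env_vals |].
  by move=> _ [s1 s1_ok <-]; have := mix _ _ s1_ok s2_ok; lra.
have : env (l *: x + (1 - l) *: y) - l * env x <= (1 - l) * env y.
  apply: ler_mul_inf l'_ge0 _ => //;
    [exact: env_vals_neq0 | exact: has_lbound_env_vals |].
  by move=> _ [s2 s2_ok <-]; have := mix_x _ s2_ok; lra.
lra.
Qed.

Lemma env_semiconcave x u :
  env (x + u) + env (x - u) <= 2 * env x + 2 * C * dotv u u.
Proof.
have : env (x + u) + env (x - u) - 2 * C * dotv u u <= 2 * env x.
  apply: ler_mul_inf => //; [exact: env_vals_neq0 | exact: has_lbound_env_vals |].
  move=> _ [s s_ok <-].
  have up := env_le_comb_val (is_wcomb_shift u s_ok).
  have um := env_le_comb_val (is_wcomb_shift (- u) s_ok).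
  rewrite !scale1r in up um.
  have := comb_val_shiftDB u s_ok; lra.
lra.
Qed.

End ConvexEnvelope.

Theorem mainTheorem17 (R : realType) (n : nat) (A : set 'rV[R]_n)
  (f : 'rV[R]_n -> R) (C : R) (a : 'rV[R]_n -> 'rV[R]_n) :
  0 < C ->
  (forall p x, A p -> A x ->
     f p + dotv (x - p) (a p) - C / 2 * enorm (x - p) ^+ 2 <= f x /\
     f x <= f p + dotv (x - p) (a p) + C / 2 * enorm (x - p) ^+ 2) ->
  (forall p q x, A p -> A q ->
     f p + dotv (x - p) (a p) - C / 2 * enorm (x - p) ^+ 2 <=
     f q + dotv (x - q) (a q) + C / 2 * enorm (x - q) ^+ 2) ->
  exists F : 'rV[R]_n -> R, C11 F /\ (forall x, A x -> F x = f x).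
Proof.
(* The second hypothesis implies the first (take x = q, resp. x = p). *)
move=> C_gt0 _ barrier_le.
have [[p0 A_p0]|A_empty] := pselect (exists p, A p); last first.
  exists (fun=> 0); split; last by move=> x Ax; case: A_empty; exists x.
  apply: (@C11_of_quadratic_taylor _ _ _ (fun=> 0) 0) => // x k.
  by rewrite dotv0r !subrr normr0 mul0r.
pose h := env A f C a.
have C_ge0 : 0 <= C by exact: ltW.
have h_taylor := convex_semiconcave_taylor (mulr_ge0 (ler0n _ 2) C_ge0)
  (env_convex barrier_le A_p0) (env_semiconcave barrier_le A_p0).
exists (fun x => h x - C / 2 * dotv x x); split.
  apply: (C11_of_quadratic_taylor (G := fun x => grad h x - C *: x)
                                  (K := 2 * C + C)); first lra.
  exact: taylor_subr_sqr C_ge0 h_taylor.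
by move=> x Ax; rewrite /h env_eq // addrK.
Qed.
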